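(* Under the hypotheses of Lemma 2.2, the additive map $\varphi:\mathcal{U}\to\mathcal{U}$, $\varphi(U)=\phi(U)-\phi(I)U+[T,U]$ with $T=P_1\phi(P_1)P_2+P_2\phi(P_2)P_1$, is a Jordan derivation, i.e. $\varphi(U^2)=\varphi(U)U+U\varphi(U)$ for all $U\in\mathcal{U}$.
   Context: $\mathcal{U}=\begin{pmatrix}\mathcal{A}&\mathcal{M}\\ \mathcal{N}&\mathcal{B}\end{pmatrix}$ is a generalized matrix ring: $\mathcal{A},\mathcal{B}$ unital 2-torsion free rings, $\mathcal{M}$ a unital $(\mathcal{A},\mathcal{B})$-bimodule faithful on both sides, $\mathcal{N}$ a unital $(\mathcal{B},\mathcal{A})$-bimodule, with bimodule pairings $MN\in\mathcal{A}$, $NM\in\mathcal{B}$ satisfying $(MN)M'=M(NM')$, $(NM)N'=N(MN')$; $\mathcal{U}$ consists of $2\times2$ matrices with usual matrix operations and identity $I$. The hypotheses of Lemma 2.2: $\phi:\mathcal{U}\to\mathcal{U}$ is additive and $\phi(U)\circ V+U\circ\phi(V)=0$ whenever $UV=VU=0$. $X\circ Y=XY+YX$, $[X,Y]=XY-YX$. $P_1=\mathrm{diag}(I_{\mathcal{A}},0)$, $P_2=\mathrm{diag}(0,I_{\mathcal{B}})$. *)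

From HB Require Import structures.
From mathcomp Require Import all_boot all_order all_algebra.
Set Implicit Arguments. Unset Strict Implicit. Unset Printing Implicit Defensive.
Import GRing.Theory.
Local Open Scope ring_scope.

(* A Morita context (A, B, M, N): A, B unital rings, M a unital (A,B)-bimodule,
   N a unital (B,A)-bimodule, with bimodule pairings M x N -> A, N x M -> B
   satisfying (mn)m' = m(nm') and (nm)n' = n(mn'). *)
Record gmr := GMR {
  gA : pzRingType; gB : pzRingType; gM : zmodType; gN : zmodType;
  amM : gA -> gM -> gM;
  maM : gM -> gB -> gM;
  bnN : gB -> gN -> gN;
  naN : gN -> gA -> gN;
  pMN : gM -> gN -> gA;
  pNM : gN -> gM -> gB;
  amMDl : forall a a' m, amM (a + a') m = amM a m + amM a' m;
  amMDr : forall a m m', amM a (m + m') = amM a m + amM a m';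
  amMA : forall a a' m, amM (a * a') m = amM a (amM a' m);
  amM1 : forall m, amM 1 m = m;
  maMDl : forall m m' b, maM (m + m') b = maM m b + maM m' b;
  maMDr : forall m b b', maM m (b + b') = maM m b + maM m b';
  maMA : forall m b b', maM m (b * b') = maM (maM m b) b';
  maM1 : forall m, maM m 1 = m;
  amMmaM : forall a m b, amM a (maM m b) = maM (amM a m) b;
  bnNDl : forall b b' n, bnN (b + b') n = bnN b n + bnN b' n;
  bnNDr : forall b n n', bnN b (n + n') = bnN b n + bnN b n';
  bnNA : forall b b' n, bnN (b * b') n = bnN b (bnN b' n);
  bnN1 : forall n, bnN 1 n = n;
  naNDl : forall n n' a, naN (n + n') a = naN n a + naN n' a;
  naNDr : forall n a a', naN n (a + a') = naN n a + naN n a';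
  naNA : forall n a a', naN n (a * a') = naN (naN n a) a';
  naN1 : forall n, naN n 1 = n;
  bnNnaN : forall b n a, bnN b (naN n a) = naN (bnN b n) a;
  pMNDl : forall m m' n, pMN (m + m') n = pMN m n + pMN m' n;
  pMNDr : forall m n n', pMN m (n + n') = pMN m n + pMN m n';
  pMN_amM : forall a m n, pMN (amM a m) n = a * pMN m n;
  pMN_naN : forall m n a, pMN m (naN n a) = pMN m n * a;
  pMN_bal : forall m b n, pMN (maM m b) n = pMN m (bnN b n);
  pNMDl : forall n n' m, pNM (n + n') m = pNM n m + pNM n' m;
  pNMDr : forall n m m', pNM n (m + m') = pNM n m + pNM n m';
  pNM_bnN : forall b n m, pNM (bnN b n) m = b * pNM n m;
  pNM_maM : forall n m b, pNM n (maM m b) = pNM n m * b;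
  pNM_bal : forall n a m, pNM (naN n a) m = pNM n (amM a m);
  pMN_assoc : forall m n m', amM (pMN m n) m' = maM m (pNM n m');
  pNM_assoc : forall n m n', bnN (pNM n m) n' = naN n (pMN m n')
}.

Record gmx (G : gmr) := Gmx { e11 : gA G; e12 : gM G; e21 : gN G; e22 : gB G }.

Section Ops.
Variable G : gmr.
Definition gmx_add (X Y : gmx G) : gmx G :=
  Gmx (e11 X + e11 Y) (e12 X + e12 Y) (e21 X + e21 Y) (e22 X + e22 Y).
Definition gmx_opp (X : gmx G) : gmx G :=
  Gmx (- e11 X) (- e12 X) (- e21 X) (- e22 X).
Definition gmx_sub (X Y : gmx G) : gmx G := gmx_add X (gmx_opp Y).
Definition gmx_zero : gmx G := Gmx 0 0 0 0.
Definition gmx_one : gmx G := Gmx 1 0 0 1.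
Definition gmx_mul (X Y : gmx G) : gmx G :=
  Gmx (e11 X * e11 Y + pMN (e12 X) (e21 Y))
      (amM (e11 X) (e12 Y) + maM (e12 X) (e22 Y))
      (bnN (e22 X) (e21 Y) + naN (e21 X) (e11 Y))
      (pNM (e21 X) (e12 Y) + e22 X * e22 Y).
Definition gmx_P1 : gmx G := Gmx 1 0 0 0.
Definition gmx_P2 : gmx G := Gmx 0 0 0 1.
Definition gmx_jordan (X Y : gmx G) : gmx G := gmx_add (gmx_mul X Y) (gmx_mul Y X).
Definition gmx_comm (X Y : gmx G) : gmx G := gmx_sub (gmx_mul X Y) (gmx_mul Y X).
End Ops.

(* Put psi U := phi U - phi(I) U + [T, U].  The zero-product hypothesis on the
   pair E11 a, E22 b shows that phi(I) = diag(z1, z2) and that the off-diagonal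
   entries of phi(E11 a) and phi(E22 b) are those of [-T, E11 a] and [-T, E22 b],
   so psi maps each diagonal corner into itself.  On the orthogonal pairs
   P1 + E12 m, P2 - E12 m and P1 + E21 n, P2 - E21 n it gives m z2 = z1 m and
   n z1 = z2 n; by faithfulness phi(I) is then central, and psi itself satisfies
   the zero-product identity.  Consequently psi acts entrywise, through maps
   A -> A, M -> M, N -> N, B -> B and M -> N, N -> M, and further orthogonal
   pairs yield Leibniz rules for these maps with respect to all the module
   actions and pairings; faithfulness turns the rules on A and B into
   derivations, and expanding psi(U^2) entrywise gives the Jordan identity. *)

From HB Require Import structures.
From mathcomp Require Import all_boot all_order all_algebra.
Set Implicit Arguments. Unset Strict Implicit. Unset Printing Implicit Defensive.
Import GRing.Theory.
Local Open Scope ring_scope.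

Section AbelianReflection.
Variable V : zmodType.

Inductive zexpr := ZAtom of nat | ZZero | ZAdd of zexpr & zexpr | ZOpp of zexpr.

Fixpoint zeval (env : seq V) e := match e with
  | ZAtom i => nth 0 env i
  | ZZero => 0
  | ZAdd e1 e2 => zeval env e1 + zeval env e2
  | ZOpp e1 => - zeval env e1
  end.

(* Normal form: the list of integer coefficients of the atoms. *)
Fixpoint coef_add (s1 s2 : seq int) := match s1, s2 with
  | [::], _ => s2
  | _, [::] => s1
  | x :: s1', y :: s2' => (x + y) :: coef_add s1' s2'
  end.

Fixpoint lincomb (env : seq V) (s : seq int) := match s with
  | [::] => 0
  | x :: s' => head 0 env *~ x + lincomb (behead env) s'
  end.

Fixpoint zcoefs e := match e with
  | ZAtom i => ncons i 0 [:: 1]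
  | ZZero => [::]
  | ZAdd e1 e2 => coef_add (zcoefs e1) (zcoefs e2)
  | ZOpp e1 => map -%R (zcoefs e1)
  end.

Lemma lincomb_add env s1 s2 :
  lincomb env (coef_add s1 s2) = lincomb env s1 + lincomb env s2.
Proof.
elim: s1 s2 env => [|x s1 IH] [|y s2] env /=; rewrite ?add0r ?addr0 //.
by rewrite IH mulrzDr addrACA.
Qed.

Lemma lincomb_opp env s : lincomb env (map -%R s) = - lincomb env s.
Proof. by elim: s env => [|x s IH] env /=; rewrite ?oppr0 // IH mulrNz opprD. Qed.

Lemma lincomb_nil s : lincomb [::] s = 0.
Proof. by elim: s => //= x s ->; rewrite mul0rz addr0. Qed.

Lemma lincomb_atom env i : lincomb env (ncons i 0 [:: 1]) = nth 0 env i.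
Proof.
elim: i env => [|i IH] [|y env] /=;
  by rewrite ?IH ?lincomb_nil ?nth_nil ?mul0rz ?mulr0z ?mulr1z ?add0r ?addr0.
Qed.

Lemma zeval_lincomb env e : zeval env e = lincomb env (zcoefs e).
Proof.
elim: e => [i||e1 IH1 e2 IH2|e1 IH1] /=.
- by rewrite lincomb_atom.
- by [].
- by rewrite lincomb_add IH1 IH2.
- by rewrite lincomb_opp IH1.
Qed.

Lemma lincomb_eq0 env s : all (pred1 0) s -> lincomb env s = 0.
Proof.
by elim: s env => [|x s IH] env //= /andP[/eqP-> /IH->]; rewrite mulr0z addr0.
Qed.

Lemma zexprP env e1 e2 :
  all (pred1 0) (zcoefs (ZAdd e1 (ZOpp e2))) -> zeval env e1 = zeval env e2.
Proof.
by move=> H; apply: subr0_eq; rewrite -(lincomb_eq0 env H) -zeval_lincomb.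
Qed.

End AbelianReflection.

(* [abel] proves identities in an abelian group, treating every subterm that is
   not built from [+], [-] and [0] as an atom. *)
Ltac zinlist x l :=
  match l with (?y :: ?l') => first [unify x y | zinlist x l'] end.
Ltac zatoms t l :=
  match t with
  | (?a + ?b)%R => let l1 := zatoms a l in zatoms b l1
  | (- ?a)%R => zatoms a l
  | 0%R => l
  | _ => match l with
         | _ => let _ := match goal with _ => zinlist t l end in l
         | _ => constr:(t :: l)
         end
  end.
Ltac zindex x l :=
  match l with (?y :: ?l') =>
    match goal with
    | _ => let _ := match goal with _ => unify x y end in constr:(0%N)
    | _ => let i := zindex x l' in constr:(S i)
    end
  end.
Ltac zreify t l :=
  match t with
  | (?a + ?b)%R => let ea := zreify a l in let eb := zreify b l in constr:(ZAdd ea eb)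
  | (- ?a)%R => let ea := zreify a l in constr:(ZOpp ea)
  | 0%R => constr:(ZZero)
  | _ => let i := zindex t l in constr:(ZAtom i)
  end.
Ltac abel :=
  match goal with |- @eq ?T ?a ?b =>
    let l := zatoms a (@nil T) in let l := zatoms b l in
    let ea := zreify a l in let eb := zreify b l in
    apply: (@zexprP _ l ea eb); vm_compute; reflexivity
  end.

Section Biadditive.
Variables (U V W : zmodType) (f : U -> V -> W).
Hypothesis fDl : forall x x' y, f (x + x') y = f x y + f x' y.
Hypothesis fDr : forall x y y', f x (y + y') = f x y + f x y'.

Lemma biadd0l y : f 0 y = 0.
Proof. by apply: (@addrI _ (f 0 y)); rewrite -fDl !addr0. Qed.
Lemma biadd0r x : f x 0 = 0.
Proof. by apply: (@addrI _ (f x 0)); rewrite -fDr !addr0. Qed.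
Lemma biaddNl x y : f (- x) y = - f x y.
Proof. by apply: (@addrI _ (f x y)); rewrite -fDl !subrr biadd0l. Qed.
Lemma biaddNr x y : f x (- y) = - f x y.
Proof. by apply: (@addrI _ (f x y)); rewrite -fDr !subrr biadd0r. Qed.
End Biadditive.

Section MoritaContext.
Variable G : gmr.

Lemma amM0l (m : gM G) : amM 0 m = 0.
Proof. exact: (@biadd0l _ _ _ _ (@amMDl G)). Qed.
Lemma amM0r (a : gA G) : amM a 0 = 0.
Proof. exact: (@biadd0r _ _ _ _ (@amMDr G)). Qed.
Lemma amMNl a (m : gM G) : amM (- a) m = - amM a m.
Proof. exact: (@biaddNl _ _ _ _ (@amMDl G)). Qed.
Lemma amMNr (a : gA G) m : amM a (- m) = - amM a m.
Proof. exact: (@biaddNr _ _ _ _ (@amMDr G)). Qed.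
Lemma maM0l (b : gB G) : maM 0 b = 0.
Proof. exact: (@biadd0l _ _ _ _ (@maMDl G)). Qed.
Lemma maM0r (m : gM G) : maM m 0 = 0.
Proof. exact: (@biadd0r _ _ _ _ (@maMDr G)). Qed.
Lemma maMNl m (b : gB G) : maM (- m) b = - maM m b.
Proof. exact: (@biaddNl _ _ _ _ (@maMDl G)). Qed.
Lemma maMNr (m : gM G) b : maM m (- b) = - maM m b.
Proof. exact: (@biaddNr _ _ _ _ (@maMDr G)). Qed.
Lemma bnN0l (n : gN G) : bnN 0 n = 0.
Proof. exact: (@biadd0l _ _ _ _ (@bnNDl G)). Qed.
Lemma bnN0r (b : gB G) : bnN b 0 = 0.
Proof. exact: (@biadd0r _ _ _ _ (@bnNDr G)). Qed.
Lemma bnNNl b (n : gN G) : bnN (- b) n = - bnN b n.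
Proof. exact: (@biaddNl _ _ _ _ (@bnNDl G)). Qed.
Lemma bnNNr (b : gB G) n : bnN b (- n) = - bnN b n.
Proof. exact: (@biaddNr _ _ _ _ (@bnNDr G)). Qed.
Lemma naN0l (a : gA G) : naN 0 a = 0.
Proof. exact: (@biadd0l _ _ _ _ (@naNDl G)). Qed.
Lemma naN0r (n : gN G) : naN n 0 = 0.
Proof. exact: (@biadd0r _ _ _ _ (@naNDr G)). Qed.
Lemma naNNl n (a : gA G) : naN (- n) a = - naN n a.
Proof. exact: (@biaddNl _ _ _ _ (@naNDl G)). Qed.
Lemma naNNr (n : gN G) a : naN n (- a) = - naN n a.
Proof. exact: (@biaddNr _ _ _ _ (@naNDr G)). Qed.
Lemma pMN0l (n : gN G) : pMN 0 n = 0.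
Proof. exact: (@biadd0l _ _ _ _ (@pMNDl G)). Qed.
Lemma pMN0r (m : gM G) : pMN m 0 = 0.
Proof. exact: (@biadd0r _ _ _ _ (@pMNDr G)). Qed.
Lemma pMNNl m (n : gN G) : pMN (- m) n = - pMN m n.
Proof. exact: (@biaddNl _ _ _ _ (@pMNDl G)). Qed.
Lemma pMNNr (m : gM G) n : pMN m (- n) = - pMN m n.
Proof. exact: (@biaddNr _ _ _ _ (@pMNDr G)). Qed.
Lemma pNM0l (m : gM G) : pNM 0 m = 0.
Proof. exact: (@biadd0l _ _ _ _ (@pNMDl G)). Qed.
Lemma pNM0r (n : gN G) : pNM n 0 = 0.
Proof. exact: (@biadd0r _ _ _ _ (@pNMDr G)). Qed.
Lemma pNMNl n (m : gM G) : pNM (- n) m = - pNM n m.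
Proof. exact: (@biaddNl _ _ _ _ (@pNMDl G)). Qed.
Lemma pNMNr (n : gN G) m : pNM n (- m) = - pNM n m.
Proof. exact: (@biaddNr _ _ _ _ (@pNMDr G)). Qed.
End MoritaContext.

(* Normalizes the entries of products: iterated actions are merged into ring
   products and actions are pulled out of the pairings. *)
Ltac gsimpl := repeat progress rewrite
  ?mulrDl ?mulrDr ?mulrN ?mulNr ?mul0r ?mulr0 ?mulrA ?mul1r ?mulr1
  ?amMDl ?amMDr ?amMNl ?amMNr ?amM0l ?amM0r ?amM1
  ?maMDl ?maMDr ?maMNl ?maMNr ?maM0l ?maM0r ?maM1
  ?bnNDl ?bnNDr ?bnNNl ?bnNNr ?bnN0l ?bnN0r ?bnN1
  ?naNDl ?naNDr ?naNNl ?naNNr ?naN0l ?naN0r ?naN1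
  ?pMNDl ?pMNDr ?pMNNl ?pMNNr ?pMN0l ?pMN0r
  ?pNMDl ?pNMDr ?pNMNl ?pNMNr ?pNM0l ?pNM0r
  -?amMA -?maMA ?amMmaM -?bnNA -?naNA ?bnNnaN
  ?pMN_amM ?pMN_naN ?pMN_bal ?pNM_bnN ?pNM_maM ?pNM_bal ?pMN_assoc ?pNM_assoc
  ?opprK ?oppr0 ?addr0 ?add0r ?opprD.

Lemma gmx_ext (G : gmr) (X Y : gmx G) :
  e11 X = e11 Y -> e12 X = e12 Y -> e21 X = e21 Y -> e22 X = e22 Y -> X = Y.
Proof. by case: X; case: Y => /= ? ? ? ? ? ? ? ? -> -> -> ->. Qed.

Ltac gmx_eq := apply: gmx_ext => /=; gsimpl; try abel.

Section GeneralizedMatrixRing.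
Variable G : gmr.
Local Notation R := (gmx G).

Definition gmx_tuple (X : R) := (e11 X, e12 X, e21 X, e22 X).
Definition tuple_gmx (t : gA G * gM G * gN G * gB G) : R :=
  Gmx t.1.1.1 t.1.1.2 t.1.2 t.2.
Lemma gmx_tupleK : cancel gmx_tuple tuple_gmx. Proof. by case. Qed.
HB.instance Definition _ := Choice.copy R (can_type gmx_tupleK).

Lemma gmx_addA : associative (@gmx_add G). Proof. by move=> *; gmx_eq. Qed.
Lemma gmx_addC : commutative (@gmx_add G). Proof. by move=> *; gmx_eq. Qed.
Lemma gmx_add0 : left_id (gmx_zero G) (@gmx_add G). Proof. by move=> *; gmx_eq. Qed.
Lemma gmx_addN : left_inverse (gmx_zero G) (@gmx_opp G) (@gmx_add G).
Proof. by move=> *; gmx_eq. Qed.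
Lemma gmx_mulA : associative (@gmx_mul G). Proof. by move=> *; gmx_eq. Qed.
Lemma gmx_mul1 : left_id (gmx_one G) (@gmx_mul G). Proof. by move=> *; gmx_eq. Qed.
Lemma gmx_mulr1 : right_id (gmx_one G) (@gmx_mul G). Proof. by move=> *; gmx_eq. Qed.
Lemma gmx_mulDl : left_distributive (@gmx_mul G) (@gmx_add G).
Proof. by move=> *; gmx_eq. Qed.
Lemma gmx_mulDr : right_distributive (@gmx_mul G) (@gmx_add G).
Proof. by move=> *; gmx_eq. Qed.
HB.instance Definition _ := GRing.isPzRing.Build R gmx_addA gmx_addC gmx_add0
  gmx_addN gmx_mulA gmx_mul1 gmx_mulr1 gmx_mulDl gmx_mulDr.

Definition E11 (a : gA G) : R := Gmx a 0 0 0.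
Definition E12 (m : gM G) : R := Gmx 0 m 0 0.
Definition E21 (n : gN G) : R := Gmx 0 0 n 0.
Definition E22 (b : gB G) : R := Gmx 0 0 0 b.

Lemma E11_is_zmod_morphism : zmod_morphism E11. Proof. by move=> *; gmx_eq. Qed.
Lemma E12_is_zmod_morphism : zmod_morphism E12. Proof. by move=> *; gmx_eq. Qed.
Lemma E21_is_zmod_morphism : zmod_morphism E21. Proof. by move=> *; gmx_eq. Qed.
Lemma E22_is_zmod_morphism : zmod_morphism E22. Proof. by move=> *; gmx_eq. Qed.
HB.instance Definition _ := GRing.isZmodMorphism.Build _ _ E11 E11_is_zmod_morphism.
HB.instance Definition _ := GRing.isZmodMorphism.Build _ _ E12 E12_is_zmod_morphism.
HB.instance Definition _ := GRing.isZmodMorphism.Build _ _ E21 E21_is_zmod_morphism.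
HB.instance Definition _ := GRing.isZmodMorphism.Build _ _ E22 E22_is_zmod_morphism.

Lemma gmx_split a m n b : Gmx a m n b = E11 a + E12 m + E21 n + E22 b :> R.
Proof. by gmx_eq. Qed.

End GeneralizedMatrixRing.

(* Closes [x = 0] when, after normalization, [x] or [- x] is the left-hand
   side of [H : s = 0] up to the abelian group laws. *)
Ltac solve_from H :=
  move: H => /=; gsimpl; move=> H; gsimpl;
  first [ apply: (etrans _ H); abel
        | apply/eqP; rewrite -oppr_eq0; apply/eqP; gsimpl; apply: (etrans _ H); abel ].

Section ZeroProductDerivations.
Variable G : gmr.
Local Notation R := (gmx G).
Hypothesis tfA : forall a : gA G, a + a = 0 -> a = 0.
Hypothesis tfB : forall b : gB G, b + b = 0 -> b = 0.
Hypothesis faithA : forall a : gA G, (forall m : gM G, amM a m = 0) -> a = 0.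
Hypothesis faithB : forall b : gB G, (forall m : gM G, maM m b = 0) -> b = 0.
Variable phi : R -> R.
Hypothesis phiD : forall X Y : R, phi (X + Y) = phi X + phi Y.
Hypothesis phi_zero_product : forall X Y : R, X * Y = 0 -> Y * X = 0 ->
  phi X * Y + Y * phi X + (X * phi Y + phi Y * X) = 0.

Lemma phiB X Y : phi (X - Y) = phi X - phi Y.
Proof. by apply: (addIr (phi Y)); rewrite -phiD !subrK. Qed.

Lemma phi_E11_E22 a b :
  [/\ a * e11 (phi (E22 b)) + e11 (phi (E22 b)) * a = 0,
      maM (e12 (phi (E11 a))) b + amM a (e12 (phi (E22 b))) = 0,
      bnN b (e21 (phi (E11 a))) + naN (e21 (phi (E22 b))) a = 0 &
      e22 (phi (E11 a)) * b + b * e22 (phi (E11 a)) = 0].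
Proof.
have H := @phi_zero_product (E11 a) (E22 b) ltac:(by gmx_eq) ltac:(by gmx_eq).
split; [have H1 := congr1 (@e11 G) H | have H1 := congr1 (@e12 G) H
       | have H1 := congr1 (@e21 G) H | have H1 := congr1 (@e22 G) H]; solve_from H1.
Qed.

Local Notation tM := (e12 (phi (E11 1))).
Local Notation tN := (e21 (phi (E22 1))).
Local Notation z1 := (e11 (phi (E11 1))).
Local Notation z2 := (e22 (phi (E22 1))).

Lemma phiE22_11 b : e11 (phi (E22 b)) = 0.
Proof. by have [+ _ _ _] := phi_E11_E22 1 b; rewrite mulr1 mul1r; exact: tfA. Qed.

Lemma phiE11_22 a : e22 (phi (E11 a)) = 0.
Proof. by have [_ _ _ +] := phi_E11_E22 a 1; rewrite mulr1 mul1r; exact: tfB. Qed.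

Lemma phiP2_12 : e12 (phi (E22 1)) = - tM.
Proof. by have [_ /eqP + _ _] := phi_E11_E22 1 1; rewrite maM1 amM1 addrC addr_eq0 => /eqP. Qed.

Lemma phiP1_21 : e21 (phi (E11 1)) = - tN.
Proof. by have [_ _ /eqP + _] := phi_E11_E22 1 1; rewrite bnN1 naN1 addr_eq0 => /eqP. Qed.

Lemma phiE11_12 a : e12 (phi (E11 a)) = amM a tM.
Proof.
have [_ /eqP + _ _] := phi_E11_E22 a 1.
by rewrite maM1 phiP2_12 amMNr addr_eq0 opprK => /eqP.
Qed.

Lemma phiE22_12 b : e12 (phi (E22 b)) = - maM tM b.
Proof. by have [_ /eqP + _ _] := phi_E11_E22 1 b; rewrite amM1 addrC addr_eq0 => /eqP. Qed.

Lemma phiE11_21 a : e21 (phi (E11 a)) = - naN tN a.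
Proof. by have [_ _ /eqP + _] := phi_E11_E22 a 1; rewrite bnN1 addr_eq0 => /eqP. Qed.

Lemma phiE22_21 b : e21 (phi (E22 b)) = bnN b tN.
Proof.
have [_ _ /eqP + _] := phi_E11_E22 1 b.
by rewrite naN1 phiP1_21 bnNNr addrC addr_eq0 opprK => /eqP.
Qed.

Lemma phi1_diag : phi 1 = Gmx z1 0 0 z2.
Proof.
rewrite (_ : 1 = E11 1 + E22 1) ?phiD; last by gmx_eq.
apply: gmx_ext => /=.
- by rewrite phiE22_11 addr0.
- by rewrite phiP2_12 subrr.
- by rewrite phiP1_21 addNr.
- by rewrite phiE11_22 add0r.
Qed.

Definition T : R := E11 1 * phi (E11 1) * E22 1 + E22 1 * phi (E22 1) * E11 1.

Lemma T_offdiag : T = Gmx 0 tM tN 0.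
Proof. by rewrite /T; gmx_eq. Qed.

(* Locked, so that [/=] leaves [e11 (psi X)] etc. alone. *)
Definition psi : R -> R := locked (fun X => phi X - phi 1 * X + (T * X - X * T)).

Lemma psiE X : psi X = phi X - phi 1 * X + (T * X - X * T).
Proof. by rewrite /psi -lock. Qed.

Lemma psiD X Y : psi (X + Y) = psi X + psi Y.
Proof. by rewrite !psiE phiD !(mulrDl, mulrDr); abel. Qed.

Lemma psiB X Y : psi (X - Y) = psi X - psi Y.
Proof. by rewrite !psiE phiB !(mulrBl, mulrBr); abel. Qed.

Lemma psiE11 a : psi (E11 a) = E11 (e11 (phi (E11 a)) - z1 * a).
Proof.
rewrite psiE phi1_diag T_offdiag; apply: gmx_ext => /=; gsimpl.
- by [].
- by rewrite (phiE11_12 a); abel.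
- by rewrite (phiE11_21 a); abel.
- by rewrite phiE11_22.
Qed.

Lemma psiE22 b : psi (E22 b) = E22 (e22 (phi (E22 b)) - z2 * b).
Proof.
rewrite psiE phi1_diag T_offdiag; apply: gmx_ext => /=; gsimpl.
- by rewrite phiE22_11.
- by rewrite (phiE22_12 b); abel.
- by rewrite (phiE22_21 b); abel.
- by [].
Qed.

Lemma psiE11_1 : psi (E11 1) = 0.
Proof. by rewrite psiE11 mulr1 subrr raddf0. Qed.

Lemma psiE22_1 : psi (E22 1) = 0.
Proof. by rewrite psiE22 mulr1 subrr raddf0. Qed.

Lemma psi_zero_product_phi1 X Y : X * Y = 0 -> Y * X = 0 ->
  psi X * Y + Y * psi X + (X * psi Y + psi Y * X) + (X * phi 1 * Y + Y * phi 1 * X) = 0.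
Proof.
move=> XY YX; apply: etrans (@phi_zero_product X Y XY YX); rewrite !psiE.
have XYr A : X * (Y * A) = 0 by rewrite mulrA XY mul0r.
have YXr A : Y * (X * A) = 0 by rewrite mulrA YX mul0r.
rewrite !(mulrDl, mulrDr, mulrBl, mulrBr, mulrN, mulNr, opprD, opprK) -!mulrA
  ?XYr ?YXr ?XY ?YX ?mulr0 ?oppr0 ?addr0 ?add0r.
abel.
Qed.

Definition derA a := e11 (psi (E11 a)).
Definition derM m := e12 (psi (E12 m)).
Definition crossMN m := e21 (psi (E12 m)).
Definition crossNM n := e12 (psi (E21 n)).
Definition derN n := e21 (psi (E21 n)).
Definition derB b := e22 (psi (E22 b)).

Lemma crossMN_annihilated m : pMN m (crossMN m) = 0 /\ pNM (crossMN m) m = 0.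
Proof.
have := @psi_zero_product_phi1 (E12 m) (E12 m) ltac:(by gmx_eq) ltac:(by gmx_eq).
rewrite /crossMN phi1_diag; move: (psi (E12 m)) => Y H.
split; [apply: tfA; have H1 := congr1 (@e11 G) H
       | apply: tfB; have H1 := congr1 (@e22 G) H]; solve_from H1.
Qed.

Lemma crossNM_annihilated n : pMN (crossNM n) n = 0 /\ pNM n (crossNM n) = 0.
Proof.
have := @psi_zero_product_phi1 (E21 n) (E21 n) ltac:(by gmx_eq) ltac:(by gmx_eq).
rewrite /crossNM phi1_diag; move: (psi (E21 n)) => Y H.
split; [apply: tfA; have H1 := congr1 (@e11 G) H
       | apply: tfB; have H1 := congr1 (@e22 G) H]; solve_from H1.
Qed.

(* [P1 + E12 m] and [P2 - E12 m] are orthogonal idempotents. *)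
Lemma psiE12_offdiag m :
  [/\ e11 (psi (E12 m)) = 0, e22 (psi (E12 m)) = 0 & maM m z2 = amM z1 m].
Proof.
have [ann1 ann2] := crossMN_annihilated m; rewrite /crossMN in ann1 ann2.
have := @psi_zero_product_phi1 (E11 1 + E12 m) (E22 1 - E12 m)
  ltac:(by gmx_eq) ltac:(by gmx_eq).
rewrite psiD psiB psiE11_1 psiE22_1 add0r sub0r.
rewrite phi1_diag; move: (psi (E12 m)) ann1 ann2 => Y ann1 ann2 H.
have Y11 : e11 Y = 0.
  apply: tfA; have := congr1 (@e11 G) H => /=.
  by gsimpl; rewrite ?ann1 ?ann2 => H1; solve_from H1.
have Y22 : e22 Y = 0.
  apply: tfB; have := congr1 (@e22 G) H => /=.
  by gsimpl; rewrite ?ann1 ?ann2 => H1; solve_from H1.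
split=> //; apply: subr0_eq.
by have := congr1 (@e12 G) H => /=; gsimpl; rewrite ?Y11 ?Y22 => H1; solve_from H1.
Qed.

Lemma psiE21_offdiag n :
  [/\ e11 (psi (E21 n)) = 0, e22 (psi (E21 n)) = 0 & naN n z1 = bnN z2 n].
Proof.
have [ann1 ann2] := crossNM_annihilated n; rewrite /crossNM in ann1 ann2.
have := @psi_zero_product_phi1 (E11 1 + E21 n) (E22 1 - E21 n)
  ltac:(by gmx_eq) ltac:(by gmx_eq).
rewrite psiD psiB psiE11_1 psiE22_1 add0r sub0r.
rewrite phi1_diag; move: (psi (E21 n)) ann1 ann2 => Y ann1 ann2 H.
have Y11 : e11 Y = 0.
  apply: tfA; have := congr1 (@e11 G) H => /=.
  by gsimpl; rewrite ?ann1 ?ann2 => H1; solve_from H1.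
have Y22 : e22 Y = 0.
  apply: tfB; have := congr1 (@e22 G) H => /=.
  by gsimpl; rewrite ?ann1 ?ann2 => H1; solve_from H1.
split=> //; apply: subr0_eq.
by have := congr1 (@e21 G) H => /=; gsimpl; rewrite ?Y11 ?Y22 => H1; solve_from H1.
Qed.

Lemma z1_central a : z1 * a = a * z1.
Proof.
apply: subr0_eq; apply: faithA => m.
have [_ _ z_m] := psiE12_offdiag m; have [_ _ z_am] := psiE12_offdiag (amM a m).
by rewrite amMDl amMNl !amMA -z_am -z_m -amMmaM subrr.
Qed.

Lemma z2_central b : z2 * b = b * z2.
Proof.
apply: subr0_eq; apply: faithB => m.
have [_ _ z_m] := psiE12_offdiag m; have [_ _ z_mb] := psiE12_offdiag (maM m b).
by rewrite maMDr maMNr !maMA z_m z_mb amMmaM subrr.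
Qed.

Lemma phi1_central X : phi 1 * X = X * phi 1.
Proof.
rewrite phi1_diag; apply: gmx_ext => /=; gsimpl.
- exact: z1_central.
- by have [_ _ ->] := psiE12_offdiag (e12 X).
- by have [_ _ ->] := psiE21_offdiag (e21 X).
- exact: z2_central.
Qed.

Lemma psi_zero_product X Y : X * Y = 0 -> Y * X = 0 ->
  psi X * Y + Y * psi X + (X * psi Y + psi Y * X) = 0.
Proof.
move=> XY YX; have := psi_zero_product_phi1 XY YX.
by rewrite -(phi1_central X) -(phi1_central Y) -!mulrA XY YX !mulr0 !addr0.
Qed.

Lemma derA_is_zmod_morphism : zmod_morphism derA.
Proof. by move=> x y; rewrite /derA raddfB psiB. Qed.
Lemma derM_is_zmod_morphism : zmod_morphism derM.
Proof. by move=> x y; rewrite /derM raddfB psiB. Qed.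
Lemma crossMN_is_zmod_morphism : zmod_morphism crossMN.
Proof. by move=> x y; rewrite /crossMN raddfB psiB. Qed.
Lemma crossNM_is_zmod_morphism : zmod_morphism crossNM.
Proof. by move=> x y; rewrite /crossNM raddfB psiB. Qed.
Lemma derN_is_zmod_morphism : zmod_morphism derN.
Proof. by move=> x y; rewrite /derN raddfB psiB. Qed.
Lemma derB_is_zmod_morphism : zmod_morphism derB.
Proof. by move=> x y; rewrite /derB raddfB psiB. Qed.
HB.instance Definition _ := GRing.isZmodMorphism.Build _ _ derA derA_is_zmod_morphism.
HB.instance Definition _ := GRing.isZmodMorphism.Build _ _ derM derM_is_zmod_morphism.
HB.instance Definition _ :=
  GRing.isZmodMorphism.Build _ _ crossMN crossMN_is_zmod_morphism.
HB.instance Definition _ :=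
  GRing.isZmodMorphism.Build _ _ crossNM crossNM_is_zmod_morphism.
HB.instance Definition _ := GRing.isZmodMorphism.Build _ _ derN derN_is_zmod_morphism.
HB.instance Definition _ := GRing.isZmodMorphism.Build _ _ derB derB_is_zmod_morphism.

Lemma derA1 : derA 1 = 0. Proof. by rewrite /derA psiE11_1. Qed.
Lemma derB1 : derB 1 = 0. Proof. by rewrite /derB psiE22_1. Qed.

Lemma psi_entries a m n b :
  psi (Gmx a m n b) =
  Gmx (derA a) (derM m + crossNM n) (crossMN m + derN n) (derB b).
Proof.
have E11E : psi (E11 a) = E11 (derA a) by rewrite /derA psiE11.
have E22E : psi (E22 b) = E22 (derB b) by rewrite /derB psiE22.
have [E12_11 E12_22 _] := psiE12_offdiag m.
have [E21_11 E21_22 _] := psiE21_offdiag n.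
rewrite gmx_split !psiD E11E E22E; apply: gmx_ext => /=;
  by rewrite ?E12_11 ?E12_22 ?E21_11 ?E21_22; gsimpl.
Qed.

Ltac psi_entrywise X Y H :=
  have H := @psi_zero_product X Y ltac:(by gmx_eq) ltac:(by gmx_eq);
  rewrite !psi_entries ?raddf0 ?raddfN ?derA1 ?derB1 ?addr0 ?add0r in H.

Lemma der_amM a m :
  derM (amM a m) = amM (derA a) m + amM a (derM m) /\
  crossMN (amM a m) = naN (crossMN m) a.
Proof.
psi_entrywise (Gmx a (amM a m) 0 0) (Gmx 0 (- m) 0 1) H.
split; apply: subr0_eq;
  [have H1 := congr1 (@e12 G) H | have H1 := congr1 (@e21 G) H]; solve_from H1.
Qed.

Lemma der_maM m b :
  derM (maM m b) = maM (derM m) b + maM m (derB b) /\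
  crossMN (maM m b) = bnN b (crossMN m).
Proof.
psi_entrywise (Gmx 1 m 0 0) (Gmx 0 (- maM m b) 0 b) H.
split; apply: subr0_eq;
  [have H1 := congr1 (@e12 G) H | have H1 := congr1 (@e21 G) H]; solve_from H1.
Qed.

Lemma der_naN n a :
  crossNM (naN n a) = amM a (crossNM n) /\
  derN (naN n a) = naN (derN n) a + naN n (derA a).
Proof.
psi_entrywise (Gmx a 0 (naN n a) 0) (Gmx 0 0 (- n) 1) H.
split; apply: subr0_eq;
  [have H1 := congr1 (@e12 G) H | have H1 := congr1 (@e21 G) H]; solve_from H1.
Qed.

Lemma der_bnN n b :
  crossNM (bnN b n) = maM (crossNM n) b /\
  derN (bnN b n) = bnN b (derN n) + bnN (derB b) n.
Proof.
psi_entrywise (Gmx 1 0 n 0) (Gmx 0 0 (- bnN b n) b) H.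
split; apply: subr0_eq;
  [have H1 := congr1 (@e12 G) H | have H1 := congr1 (@e21 G) H]; solve_from H1.
Qed.

Lemma der_pairing m n :
  derA (pMN m n) = pMN (derM m) n + pMN m (derN n) /\
  derB (pNM n m) = pNM (derN n) m + pNM n (derM m).
Proof.
psi_entrywise (Gmx 1 m n (pNM n m)) (Gmx (pMN m n) (- m) (- n) 1) H.
have [ann1 ann2] := crossMN_annihilated m; have [ann3 ann4] := crossNM_annihilated n.
split; apply: subr0_eq; [apply: tfA | apply: tfB];
  [have := congr1 (@e11 G) H | have := congr1 (@e22 G) H] => /=;
  gsimpl; rewrite ?ann1 ?ann2 ?ann3 ?ann4 => H1; solve_from H1.
Qed.

Lemma derAM a a' : derA (a * a') = derA a * a' + a * derA a'.
Proof.
apply: subr0_eq; apply: faithA => m.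
have [E _] := der_amM (a * a') m.
rewrite amMA (der_amM a (amM a' m)).1 (der_amM a' m).1 -amMA in E.
by move/eqP: E; rewrite -subr_eq0 => /eqP E; solve_from E.
Qed.

Lemma derBM b b' : derB (b * b') = derB b * b' + b * derB b'.
Proof.
apply: subr0_eq; apply: faithB => m.
have [E _] := der_maM m (b * b').
rewrite maMA (der_maM (maM m b) b').1 (der_maM m b).1 -maMA in E.
by move/eqP: E; rewrite -subr_eq0 => /eqP E; solve_from E.
Qed.

Lemma psi_jordan U : psi (U * U) = psi U * U + U * psi U.
Proof.
case: U => a m n b.
rewrite (_ : Gmx a m n b * Gmx a m n b = Gmx (a * a + pMN m n)
  (amM a m + maM m b) (bnN b n + naN n a) (pNM n m + b * b)) // !psi_entries.
have [ann1 ann2] := crossMN_annihilated m; have [ann3 ann4] := crossNM_annihilated n.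
(* The [/=] after [raddfD] unfolds the additive-morphism coercion back to [derA] etc. *)
apply: gmx_ext => /=; rewrite !raddfD /= ?derAM ?derBM
  ?(der_pairing m n).1 ?(der_pairing m n).2 ?(der_amM a m).1 ?(der_amM a m).2
  ?(der_maM m b).1 ?(der_maM m b).2 ?(der_naN n a).1 ?(der_naN n a).2
  ?(der_bnN n b).1 ?(der_bnN n b).2;
  gsimpl; rewrite ?ann1 ?ann2 ?ann3 ?ann4; gsimpl; abel.
Qed.

End ZeroProductDerivations.

Unset Implicit Arguments.

Theorem lemma2p7 (G : gmr)
  (tfA : forall a : gA G, a + a = 0 -> a = 0)
  (tfB : forall b : gB G, b + b = 0 -> b = 0)
  (faithA : forall a : gA G, (forall m : gM G, amM a m = 0) -> a = 0)
  (faithB : forall b : gB G, (forall m : gM G, maM m b = 0) -> b = 0)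
  (phi : gmx G -> gmx G)
  (phi_add : forall X Y, phi (gmx_add X Y) = gmx_add (phi X) (phi Y))
  (phi_zp : forall U V, gmx_mul U V = gmx_zero G -> gmx_mul V U = gmx_zero G ->
     gmx_add (gmx_jordan (phi U) V) (gmx_jordan U (phi V)) = gmx_zero G) :
  let T := gmx_add (gmx_mul (gmx_mul (gmx_P1 G) (phi (gmx_P1 G))) (gmx_P2 G))
                   (gmx_mul (gmx_mul (gmx_P2 G) (phi (gmx_P2 G))) (gmx_P1 G)) in
  let vphi := fun U => gmx_add (gmx_sub (phi U) (gmx_mul (phi (gmx_one G)) U))
                               (gmx_comm T U) in
  forall U : gmx G,
    vphi (gmx_mul U U) = gmx_add (gmx_mul (vphi U) U) (gmx_mul U (vphi U)).
Proof.
move=> T vphi U.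
have vphiE X : vphi X = psi phi X by rewrite psiE.
rewrite !vphiE.
exact: (psi_jordan tfA tfB faithA faithB phi_add phi_zp).
Qed.
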